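(* Let $0<b<1$, let $\mu,\nu$ be the Gibbs distributions of two soft-hardcore models $(G,\lambda^\mu),(G,\lambda^\nu)$ on $G=(V,E)$ with $n=|V|$, both $b$-marginally bounded, with $d_{\mathrm{par}}(\mu,\nu)\le\theta:=\frac{b}{2(1-b)n}$. Let $C=b^3$. Then: (i) for all $\sigma$, $\mu(\sigma)=0$ implies $\nu(\sigma)=0$; (ii) $\sqrt{\mathrm{Var}[W]}\le K\,d_{TV}(\mu,\nu)$ with $K=\frac{4n}{bC}$; (iii) $\mathbb{E}[W]\ge\frac1L$ with $L=2$; where $W=\frac{w_\nu(\sigma)}{w_\mu(\sigma)}$ with $\sigma\sim\mu$.
   Context: Hardcore model $(G,\lambda)$: weight $w(\sigma)=\prod_{v:\sigma_v=+1}\lambda_v$ for $\sigma\in\{-1,+1\}^V$ with $\{v:\sigma_v=+1\}$ independent in $G$, else $0$; Gibbs distribution is $w/Z$. Soft: $\lambda_v>0$ for all $v$. $d_{\mathrm{par}}(\mu,\nu)=\max_v|\lambda^\mu_v-\lambda^\nu_v|$. $b$-marginally bounded: for every $\Lambda\subseteq V$, feasible $\sigma\in\{\pm1\}^\Lambda$, $v\in V$, $c\in\{\pm1\}$, $\mu^\sigma_v(c)>0$ implies $\mu^\sigma_v(c)\ge b$ ($\mu^\sigma_v$ = marginal at $v$ of $\mu$ conditioned on $\sigma$). *)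

From mathcomp Require Import all_boot all_order all_algebra.
From mathcomp Require Import reals.
Set Implicit Arguments. Unset Strict Implicit. Unset Printing Implicit Defensive.
Import Order.TTheory GRing.Theory Num.Theory.
Local Open Scope ring_scope.

Section HC.
Variables (R : realType) (V : finType).

(* A spin configuration sigma in {-1,+1}^V, encoded with true = +1, false = -1. *)
Definition config := {ffun V -> bool}.

Definition simple_graph (G : rel V) : Prop :=
  symmetric G /\ irreflexive G.

Definition independent (G : rel V) (S : {set V}) : bool :=
  [forall u in S, forall v in S, ~~ G u v].

Definition plus_set (s : config) : {set V} := [set v | s v].

Definition hc_weight (G : rel V) (lam : V -> R) (s : config) : R :=
  if independent G (plus_set s) then \prod_(v | s v) lam v else 0.

Definition hc_Z (G : rel V) (lam : V -> R) : R := \sum_(s : config) hc_weight G lam s.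

Definition gibbs (G : rel V) (lam : V -> R) (s : config) : R :=
  hc_weight G lam s / hc_Z G lam.

Definition soft (lam : V -> R) : Prop := forall v, 0 < lam v.

Definition agrees (L : {set V}) (s t : config) : bool := [forall v in L, t v == s v].

Definition partial_prob (G : rel V) (lam : V -> R) (L : {set V}) (s : config) : R :=
  \sum_(t : config | agrees L s t) gibbs G lam t.

Definition cond_marginal (G : rel V) (lam : V -> R) (L : {set V}) (s : config)
  (v : V) (c : bool) : R :=
  (\sum_(t : config | agrees L s t && (t v == c)) gibbs G lam t) / partial_prob G lam L s.

Definition marginally_bounded (G : rel V) (lam : V -> R) (b : R) : Prop :=
  forall (L : {set V}) (s : config) (v : V) (c : bool),
    0 < partial_prob G lam L s ->
    0 < cond_marginal G lam L s v c -> b <= cond_marginal G lam L s v c.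

Definition d_par (lmu lnu : V -> R) : R := \big[Num.max/0]_(v : V) `|lmu v - lnu v|.

Definition d_TV (mu nu : config -> R) : R := 2^-1 * \sum_(s : config) `|mu s - nu s|.

Definition ratioW (G : rel V) (lmu lnu : V -> R) (s : config) : R :=
  hc_weight G lnu s / hc_weight G lmu s.

Definition expW (G : rel V) (lmu lnu : V -> R) : R :=
  \sum_(s : config) gibbs G lmu s * ratioW G lmu lnu s.

Definition varW (G : rel V) (lmu lnu : V -> R) : R :=
  \sum_(s : config) gibbs G lmu s * (ratioW G lmu lnu s - expW G lmu lnu) ^+ 2.

End HC.

From mathcomp Require Import all_boot all_order all_algebra.
From mathcomp Require Import reals.
From mathcomp Require Import ring lra.
Import Order.TTheory GRing.Theory Num.Theory.
Local Open Scope ring_scope.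
Set Implicit Arguments. Unset Strict Implicit. Unset Printing Implicit Defensive.

(* Marginal boundedness, applied with every other vertex unoccupied and with
   nothing fixed, gives b <= lam/(1+lam), b <= 1/(1+lam) and mu(sigma_v = +) >= b.
   So every fugacity is at least b/(1-b), the d_par hypothesis puts each ratio
   lnu_v/lmu_v within 1/(2n) of 1, and W, on the common support (the independent
   sets) a product of at most n such ratios, is at least 1/2.  Pairing each sigma
   with v occupied with sigma - v, for which mu(sigma) = lmu_v mu(sigma - v), gives
   b^2 |lnu_v/lmu_v - 1| <= 2 d_TV(mu, nu); a product of at most n such ratios is
   then within 4 n d_TV / b^2 <= K d_TV of 1, which bounds the standard deviation
   of W. *)

Lemma norm_mul_sub1_le (R : realDomainType) (x y : R) :
  `|y - 1| <= 1 -> `|x * y - 1| <= 2 * `|x - 1| + `|y - 1|.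
Proof.
move=> y1; have -> : x * y - 1 = (x - 1) * y + (y - 1) by ring.
apply: le_trans (ler_normD _ _) _; rewrite lerD2r normrM mulrC.
apply: ler_wpM2r => //; have := ler_normD (y - 1) 1.
by rewrite subrK normr1 => /le_trans; apply; lra.
Qed.

Lemma norm_prod_sub1_le (R : realFieldType) (I : Type) (l : seq I) (r : I -> R) (d : R) :
  (forall i, `|r i - 1| <= d) -> (size l)%:R * d <= 2^-1 ->
  `|\prod_(i <- l) r i - 1| <= 2 * (size l)%:R * d.
Proof.
move=> rd; elim: l => [|a l IH] /=; first by rewrite big_nil subrr normr0 mulr0 mul0r.
rewrite big_cons mulrSr => hs.
have d_ge0 : 0 <= d := le_trans (normr_ge0 _) (rd a).
have size_ge0 : 0 <= (size l)%:R :> R by [].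
have {}IH : `|\prod_(i <- l) r i - 1| <= 2 * (size l)%:R * d by apply: IH; nra.
have := norm_mul_sub1_le (r a) (_ : `|\prod_(i <- l) r i - 1| <= 1).
have := rd a; nra.
Qed.

Lemma prod_ge_1_sub (R : realFieldType) (I : Type) (l : seq I) (r : I -> R) (d : R) :
  (forall i, 1 - d <= r i) -> (size l)%:R * d <= 1 ->
  1 - (size l)%:R * d <= \prod_(i <- l) r i.
Proof.
move=> rd; elim: l => [|a l IH] /=; first by rewrite big_nil mul0r subr0.
rewrite big_cons mulrSr => hs.
have size_ge0 : 0 <= (size l)%:R :> R by [].
have d_le1 : d <= 1 by nra.
have {}IH : 1 - (size l)%:R * d <= \prod_(i <- l) r i by apply: IH; nra.
have : (1 - d) * (1 - (size l)%:R * d) <= r a * \prod_(i <- l) r i.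
  by apply: ler_pM => //; nra.
nra.
Qed.

Lemma scaled_gap_le_pair_dist (R : realDomainType) (b L1 L2 c y : R) :
  0 <= b -> b <= 1 -> b * L2 <= 1 -> 0 <= L2 -> 0 <= c ->
  b * (`|L1 - L2| * c) <= `|L1 * c - L2 * y| + `|c - y|.
Proof.
move=> b_ge0 b_le1 bL2 L2_ge0 c_ge0.
have gap : `|L1 - L2| * c <= `|L1 * c - L2 * y| + L2 * `|c - y|.
  rewrite -{1}(ger0_norm c_ge0) -normrM.
  have -> : (L1 - L2) * c = (L1 * c - L2 * y) - L2 * (c - y) by ring.
  by apply: le_trans (ler_normB _ _) _; rewrite normrM (ger0_norm L2_ge0).
have := normr_ge0 (L1 * c - L2 * y); have := normr_ge0 (c - y).
have := ler_wpM2l b_ge0 gap; nra.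
Qed.

Section FiniteExpectation.
Variables (R : realFieldType) (I : finType) (p : I -> R).
Hypotheses (p_ge0 : forall i, 0 <= p i) (p_sum1 : \sum_i p i = 1).

Lemma expectation_cst (c : R) : \sum_i p i * c = c.
Proof. by rewrite -mulr_suml p_sum1 mul1r. Qed.

Lemma ler_expectation (x y : I -> R) :
  (forall i, 0 < p i -> x i <= y i) -> \sum_i p i * x i <= \sum_i p i * y i.
Proof.
move=> xy; apply: ler_sum => i _; have := p_ge0 i.
rewrite le_eqVlt => /orP[/eqP <-|pi_gt0]; first by rewrite !mul0r.
exact/ler_wpM2l/xy/pi_gt0/ltW.
Qed.

Lemma variance_le_moment2 (x : I -> R) (a : R) :
  \sum_i p i * (x i - \sum_j p j * x j) ^+ 2 <= \sum_i p i * (x i - a) ^+ 2.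
Proof.
set E := \sum_j p j * x j.
have shift : \sum_i p i * (x i - a) ^+ 2 - \sum_i p i * (x i - E) ^+ 2 = (E - a) ^+ 2.
  rewrite -sumrB (eq_bigr (fun i => (E - a) * (2 * (p i * x i) - (E + a) * p i))).
    by rewrite -mulr_sumr sumrB -!mulr_sumr p_sum1 -/E; ring.
  by move=> i _; ring.
by have := sqr_ge0 (E - a); lra.
Qed.

End FiniteExpectation.

Section Hardcore.
Variables (R : realType) (V : finType) (G : rel V).
Hypothesis G_irr : irreflexive G.

Definition empty_config : config V := [ffun _ => false].

Definition toggle (v : V) (s : config V) : config V :=
  [ffun u => if u == v then ~~ s u else s u].

Lemma toggleK v : involutive (toggle v).
Proof. by move=> s; apply/ffunP => u; rewrite !ffunE; case: eqP => // _; rewrite negbK. Qed.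

Lemma independentS (S T : {set V}) : T \subset S -> independent G S -> independent G T.
Proof.
move=> /subsetP TS /forall_inP indS; apply/forall_inP => u /TS/indS/forall_inP indSu.
by apply/forall_inP => w /TS/indSu.
Qed.

Section OneModel.
Variable lam : V -> R.
Hypothesis lam_gt0 : soft lam.

Lemma hc_weight_ge0 s : 0 <= hc_weight G lam s.
Proof.
rewrite /hc_weight; case: ifP => // _.
by apply: prodr_ge0 => u _; apply: ltW.
Qed.

Lemma hc_weight_empty : hc_weight G lam empty_config = 1.
Proof.
have ind0 : independent G (plus_set empty_config).
  by apply/forall_inP => u; rewrite inE ffunE.
by rewrite /hc_weight ind0 big_pred0 // => u; rewrite ffunE.
Qed.

Lemma hc_weight_single v : hc_weight G lam (toggle v empty_config) = lam v.
Proof.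
have single : toggle v empty_config =1 pred1 v by move=> u; rewrite !ffunE /=; case: (u == v).
rewrite /hc_weight (big_pred1 v) // ifT //.
apply/forall_inP => u; rewrite inE single => /eqP ->.
by apply/forall_inP => w; rewrite inE single => /eqP ->; rewrite G_irr.
Qed.

Lemma hc_Z_gt0 : 0 < hc_Z G lam.
Proof.
rewrite /hc_Z (bigD1 empty_config) //= hc_weight_empty.
by rewrite ltr_pwDl ?ltr01 // sumr_ge0 // => s _; apply: hc_weight_ge0.
Qed.

Lemma gibbs_ge0 s : 0 <= gibbs G lam s.
Proof. by rewrite divr_ge0 ?hc_weight_ge0 ?ltW ?hc_Z_gt0. Qed.

Lemma gibbs_sum1 : \sum_s gibbs G lam s = 1.
Proof. by rewrite -mulr_suml divff // gt_eqF ?hc_Z_gt0. Qed.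

Lemma gibbs_gt0 s : (0 < gibbs G lam s) = independent G (plus_set s).
Proof.
rewrite /gibbs /hc_weight pmulr_lgt0 ?invr_gt0 ?hc_Z_gt0 //.
by case: ifP; rewrite ?ltxx // => _; apply/prodr_gt0 => u _.
Qed.

Lemma gibbs_eq0 s : (gibbs G lam s == 0) = ~~ independent G (plus_set s).
Proof. by rewrite eq_le gibbs_ge0 andbT leNgt gibbs_gt0. Qed.

Lemma gibbs_single v : gibbs G lam (toggle v empty_config) = lam v / hc_Z G lam.
Proof. by rewrite /gibbs hc_weight_single. Qed.

Lemma gibbs_toggle (v : V) (s : config V) : s v -> independent G (plus_set s) ->
  gibbs G lam s = lam v * gibbs G lam (toggle v s).
Proof.
move=> sv inds; have indt : independent G (plus_set (toggle v s)).
  apply: independentS inds; apply/subsetP => u; rewrite !inE ffunE.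
  by case: eqP => // ->; rewrite sv.
rewrite /gibbs /hc_weight inds indt mulrA (bigD1 v) //=; congr (_ * _ / _).
by apply: eq_bigl => u; rewrite ffunE; case: eqP => [->|]; rewrite ?sv ?andbT.
Qed.

Lemma agrees_off_vertex v c t :
  agrees [set~ v] empty_config t && (t v == c)
  = (t == if c then toggle v empty_config else empty_config).
Proof.
apply/idP/eqP => [/andP[/forall_inP agr /eqP tv]|->].
  apply/ffunP => u; case: (eqVneq u v) => [->|uv].
    by rewrite tv; case: c {tv}; rewrite !ffunE ?eqxx.
  have /eqP -> : t u == empty_config u by apply: agr; rewrite in_setC1.
  by case: c {tv}; rewrite !ffunE ?(negbTE uv).
apply/andP; split; last by case: c; rewrite !ffunE eqxx.
apply/forall_inP => u; rewrite in_setC1 => uv.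
by case: c; rewrite !ffunE ?(negbTE uv).
Qed.

Lemma partial_prob_off_vertex v :
  partial_prob G lam [set~ v] empty_config = (1 + lam v) / hc_Z G lam.
Proof.
rewrite /partial_prob (bigID (fun t : config V => t v)) /=.
rewrite (big_pred1 (toggle v empty_config)) => [|t]; last first.
  by rewrite /= -[t v]eqb_id agrees_off_vertex.
rewrite (big_pred1 empty_config) => [|t]; last first.
  by rewrite /= -eqbF_neg agrees_off_vertex.
by rewrite gibbs_single /gibbs hc_weight_empty mulrDl addrC.
Qed.

Lemma cond_marginal_off_vertex v (c : bool) :
  cond_marginal G lam [set~ v] empty_config v c = (if c then lam v else 1) / (1 + lam v).
Proof.
rewrite /cond_marginal partial_prob_off_vertex.
rewrite (big_pred1 (if c then toggle v empty_config else empty_config)) => [|t];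
  last by rewrite /= agrees_off_vertex.
have Z_neq0 : hc_Z G lam != 0 by rewrite gt_eqF ?hc_Z_gt0.
have lam1_neq0 : 1 + lam v != 0 by rewrite gt_eqF // ltr_pwDr ?ltr01.
by case: c; rewrite ?gibbs_single /gibbs ?hc_weight_empty; field; rewrite Z_neq0 lam1_neq0.
Qed.

Lemma marginally_bounded_fugacity b v : marginally_bounded G lam b ->
  b * (1 + lam v) <= lam v /\ b * (1 + lam v) <= 1.
Proof.
have lam1_gt0 : 0 < 1 + lam v by rewrite ltr_pwDr ?ltr01.
have pp_gt0 : 0 < partial_prob G lam [set~ v] empty_config.
  by rewrite partial_prob_off_vertex divr_gt0 ?hc_Z_gt0.
move=> /(_ _ _ v _ pp_gt0) mb.
have occ := mb true; have vac := mb false.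
rewrite !cond_marginal_off_vertex /= in occ vac.
by rewrite -!ler_pdivlMr //; split; [apply: occ | apply: vac]; rewrite divr_gt0.
Qed.

Lemma marginally_bounded_occupied b v : marginally_bounded G lam b ->
  b <= \sum_(t : config V | t v) gibbs G lam t.
Proof.
have agrees0 t : agrees set0 empty_config t by apply/forall_inP => u; rewrite inE.
have pp1 : partial_prob G lam set0 empty_config = 1.
  by rewrite /partial_prob -gibbs_sum1; apply: eq_bigl => t; rewrite agrees0.
have cm : cond_marginal G lam set0 empty_config v true
          = \sum_(t : config V | t v) gibbs G lam t.
  by rewrite /cond_marginal pp1 divr1; apply: eq_bigl => t; rewrite agrees0 eqb_id.
move=> mb; rewrite -cm; apply: mb; rewrite ?pp1 ?ltr01 // cm.
rewrite (bigD1 (toggle v empty_config)) /=; last by rewrite !ffunE eqxx.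
rewrite ltr_pwDl ?sumr_ge0 // => [|t _]; last exact: gibbs_ge0.
by rewrite gibbs_single divr_gt0 ?hc_Z_gt0.
Qed.

End OneModel.

Section TwoModels.
Variables lmu lnu : V -> R.
Hypotheses (lmu_gt0 : soft lmu) (lnu_gt0 : soft lnu).

Lemma fugacity_ratio_dev_le_dTV (b : R) (v : V) :
  0 <= b -> b <= 1 -> b * lnu v <= 1 -> b <= \sum_(t : config V | t v) gibbs G lmu t ->
  b ^+ 2 * `|lnu v / lmu v - 1| <= 2 * d_TV (gibbs G lmu) (gibbs G lnu).
Proof.
move=> b_ge0 b_le1 b_nu occ; set dev := `|lnu v / lmu v - 1|.
rewrite /d_TV mulrA divff ?pnatr_eq0 // mul1r.
have pair (s : config V) : s v -> b * dev * gibbs G lmu s <=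
    `|gibbs G lmu s - gibbs G lnu s| + `|gibbs G lmu (toggle v s) - gibbs G lnu (toggle v s)|.
  move=> sv; have [inds|dep] := boolP (independent G (plus_set s)); last first.
    have /eqP -> : gibbs G lmu s == 0 by rewrite gibbs_eq0.
    by rewrite mulr0 addr_ge0.
  have gap : lmu v - lnu v = - (lnu v / lmu v - 1) * lmu v by field; rewrite gt_eqF.
  rewrite !(gibbs_toggle _ sv inds); set c := gibbs G lmu (toggle v s).
  have -> : b * dev * (lmu v * c) = b * (`|lmu v - lnu v| * c).
    by rewrite gap normrM normrN (gtr0_norm (lmu_gt0 v)) -/dev; ring.
  by apply: scaled_gap_le_pair_dist => //; [exact: ltW | exact: gibbs_ge0].
rewrite (bigID (fun s : config V => s v)) /=.
rewrite [X in _ <= _ + X](reindex_inj (can_inj (toggleK v))) /=.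
rewrite [X in _ <= _ + X](eq_bigl (fun s : config V => s v)) => [|s]; last first.
  by rewrite ffunE eqxx negbK.
rewrite -big_split /=; apply: le_trans (ler_sum _ pair).
rewrite -mulr_sumr expr2 -mulrA mulrC.
exact: ler_wpM2l (mulr_ge0 b_ge0 (normr_ge0 _)) _ _ occ.
Qed.

Lemma ratioW_prod s : independent G (plus_set s) ->
  ratioW G lmu lnu s = \prod_(u <- enum (plus_set s)) (lnu u / lmu u).
Proof.
move=> inds; rewrite /ratioW /hc_weight inds -prodf_div big_enum.
by apply: eq_bigl => u; rewrite inE.
Qed.

Lemma ratioW_ge d s : 0 < gibbs G lmu s ->
  (forall u, `|lnu u / lmu u - 1| <= d) -> 0 <= d -> #|V|%:R * d <= 1 ->
  1 - #|V|%:R * d <= ratioW G lmu lnu s.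
Proof.
rewrite gibbs_gt0 // => inds r_d d_ge0 nd; rewrite ratioW_prod //.
have r_ge u : 1 - d <= lnu u / lmu u by have /ler_normlP[] := r_d u; lra.
have size_le : (size (enum (plus_set s)))%:R <= #|V|%:R :> R.
  by rewrite -cardE ler_nat max_card.
have size_d := ler_wpM2r d_ge0 size_le.
by apply: le_trans (prod_ge_1_sub r_ge (le_trans size_d nd)); rewrite lerB.
Qed.

Lemma norm_ratioW_sub1_le d d0 s : 0 < gibbs G lmu s ->
  (forall u, `|lnu u / lmu u - 1| <= d) -> (forall u, `|lnu u / lmu u - 1| <= d0) ->
  0 <= d -> 0 <= d0 -> #|V|%:R * d0 <= 2^-1 ->
  `|ratioW G lmu lnu s - 1| <= 2 * #|V|%:R * d.
Proof.
rewrite gibbs_gt0 // => inds r_d r_d0 d_ge0 d0_ge0 nd0; rewrite ratioW_prod //.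
(* [norm_prod_sub1_le] needs a factor bound [e] with [n e <= 1/2], which [d] need
   not be; [Num.min d d0] is such a bound and is still at most [d]. *)
have size_le : (size (enum (plus_set s)))%:R <= #|V|%:R :> R.
  by rewrite -cardE ler_nat max_card.
have r_min u : `|lnu u / lmu u - 1| <= Num.min d d0 by rewrite le_min r_d r_d0.
have min_ge0 : 0 <= Num.min d d0 by rewrite le_min d_ge0 d0_ge0.
apply: le_trans (norm_prod_sub1_le r_min _) _.
  by apply: le_trans nd0; apply: ler_pM => //; rewrite ge_min lexx orbT.
by apply: ler_pM; rewrite ?mulr_ge0 ?ler_wpM2l ?ge_min ?lexx.
Qed.

Lemma fugacity_ratio_dev_le_d_par b : 0 < b -> b < 1 ->
  (forall u, b * (1 + lmu u) <= lmu u) -> d_par lmu lnu <= b / (2 * (1 - b) * #|V|%:R) ->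
  forall u, `|lnu u / lmu u - 1| <= (2 * #|V|%:R)^-1.
Proof.
move=> b_gt0 b_lt1 fug par u; have lmu_u := lmu_gt0 u.
have n_gt0 : 0 < #|V|%:R :> R by rewrite ltr0n; apply/card_gt0P; exists u.
have lmu_ge : b / (1 - b) <= lmu u by rewrite ler_pdivrMr ?subr_gt0 //; have := fug u; lra.
have -> : lnu u / lmu u - 1 = (lnu u - lmu u) / lmu u by field; rewrite gt_eqF.
rewrite normf_div (gtr0_norm lmu_u) ler_pdivrMr // distrC.
apply: le_trans (le_bigmax _ (fun v => `|lmu v - lnu v|) u) (le_trans par _).
have -> : b / (2 * (1 - b) * #|V|%:R) = (2 * #|V|%:R)^-1 * (b / (1 - b)).
  by field; rewrite !gt_eqF ?subr_gt0.
by rewrite ler_wpM2l // invr_ge0 mulr_ge0 ?ltW.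
Qed.

Lemma sqrt_varW_le d d0 :
  (forall u, `|lnu u / lmu u - 1| <= d) -> (forall u, `|lnu u / lmu u - 1| <= d0) ->
  0 <= d -> 0 <= d0 -> #|V|%:R * d0 <= 2^-1 ->
  Num.sqrt (varW G lmu lnu) <= 2 * #|V|%:R * d.
Proof.
move=> r_d r_d0 d_ge0 d0_ge0 nd0; set D := 2 * #|V|%:R * d.
have D_ge0 : 0 <= D by rewrite mulr_ge0 ?mulr_ge0.
rewrite -(ger0_norm D_ge0) -sqrtr_sqr ler_sqrt ?sqr_ge0 // /varW /expW.
apply: le_trans (variance_le_moment2 (gibbs_sum1 lmu_gt0) _ 1) _.
rewrite -[X in _ <= X](expectation_cst (gibbs_sum1 lmu_gt0)).
apply: (ler_expectation (gibbs_ge0 lmu_gt0) (y := fun=> D ^+ 2)) => s pos.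
have /ler_normlP[lo hi] : `|ratioW G lmu lnu s - 1| <= D :=
  norm_ratioW_sub1_le pos r_d r_d0 d_ge0 d0_ge0 nd0.
by rewrite !expr2; nra.
Qed.

Lemma expW_ge_1_sub d :
  (forall u, `|lnu u / lmu u - 1| <= d) -> 0 <= d -> #|V|%:R * d <= 1 ->
  1 - #|V|%:R * d <= expW G lmu lnu.
Proof.
move=> r_d d_ge0 nd; rewrite /expW -[X in X <= _](expectation_cst (gibbs_sum1 lmu_gt0)).
apply: (ler_expectation (gibbs_ge0 lmu_gt0)) => s pos.
exact: ratioW_ge pos r_d d_ge0 nd.
Qed.

End TwoModels.
End Hardcore.

Unset Implicit Arguments.

Theorem lemma6p2 (R : realType) (V : finType) (G : rel V) (lmu lnu : V -> R) (b : R) :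
  simple_graph G ->
  0 < b -> b < 1 ->
  soft lmu -> soft lnu ->
  marginally_bounded G lmu b -> marginally_bounded G lnu b ->
  d_par lmu lnu <= b / (2 * (1 - b) * #|V|%:R) ->
  let C := b ^+ 3 in
  let K := 4 * #|V|%:R / (b * C) in
  let L := 2 : R in
  [/\ (forall s : config V, gibbs G lmu s = 0 -> gibbs G lnu s = 0),
      Num.sqrt (varW G lmu lnu) <= K * d_TV (gibbs G lmu) (gibbs G lnu)
    & 1 / L <= expW G lmu lnu].
Proof.
move=> [_ G_irr] b_gt0 b_lt1 lmu_gt0 lnu_gt0 mb_mu mb_nu par C K L.
have b_ge0 := ltW b_gt0; set n := #|V|%:R : R; set d0 := (2 * n)^-1.
have fug_mu u := marginally_bounded_fugacity G_irr lmu_gt0 u mb_mu.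
have fug_nu u := marginally_bounded_fugacity G_irr lnu_gt0 u mb_nu.
have r_d0 : forall u, `|lnu u / lmu u - 1| <= d0 :=
  fugacity_ratio_dev_le_d_par lmu_gt0 b_gt0 b_lt1 (fun u => (fug_mu u).1) par.
have d0_ge0 : 0 <= d0 by rewrite invr_ge0 mulr_ge0.
have n_d0 : n * d0 <= 2^-1.
  have [->|n_neq0] := eqVneq n 0; first by rewrite mul0r invr_ge0.
  by rewrite /d0 invfM mulrCA divff // mulr1.
split.
- move=> s /eqP; rewrite gibbs_eq0 // => dep.
  by apply/eqP; rewrite gibbs_eq0.
- set T := d_TV (gibbs G lmu) (gibbs G lnu).
  have T_ge0 : 0 <= T by rewrite mulr_ge0 ?invr_ge0 ?sumr_ge0.
  have r_dev u : `|lnu u / lmu u - 1| <= 2 * T / b ^+ 2.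
    have b_nu : b * lnu u <= 1 by have := (fug_nu u).2; have := lnu_gt0 u; nra.
    have occ := marginally_bounded_occupied G_irr lmu_gt0 u mb_mu.
    have := fugacity_ratio_dev_le_dTV lmu_gt0 lnu_gt0 b_ge0 (ltW b_lt1) b_nu occ.
    by rewrite ler_pdivlMr ?exprn_gt0 // mulrC.
  have dev_ge0 : 0 <= 2 * T / b ^+ 2 by rewrite divr_ge0 ?exprn_ge0 // mulr_ge0.
  apply: le_trans (sqrt_varW_le G lmu_gt0 r_dev r_d0 dev_ge0 d0_ge0 n_d0) _.
  have -> : 2 * n * (2 * T / b ^+ 2) = b ^+ 2 * (K * T).
    by rewrite /K /C; field; rewrite gt_eqF.
  have KT_ge0 : 0 <= K * T by rewrite mulr_ge0 // divr_ge0 ?mulr_ge0 ?exprn_ge0.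
  exact: ler_piMl KT_ge0 (exprn_ile1 _ b_ge0 (ltW b_lt1)).
- apply: le_trans (expW_ge_1_sub G lmu_gt0 r_d0 d0_ge0 _); rewrite -/n /L; lra.
Qed.
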